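(* Let $a$ and $i$ be positive integers. Then $$\binom{3a+i}{a+i}-\binom{3a+2i}{a}=\sum_{k\geq1}\left\{\frac{i+3k}{i+k}\binom{i+k}{2k}-\binom{i}{k}\right\}\binom{3a+i}{a-k}.$$
   Context: Here $\binom{n}{m}$ denotes the ordinary binomial coefficient, with $\binom{n}{m}=0$ when $m<0$ or $m>n$ (so the sum is finite). *)

From mathcomp Require Import all_boot all_order all_algebra.

(* Write w(i, k) := C(i+k, 2k) + C(i+k-1, 2k-1) for k > 0 and w(i, 0) := 1, so
   that w(i, k) = (i+3k)/(i+k) C(i+k, 2k).  By Vandermonde's convolution the
   sum over k >= 1 of C(i, k) C(3a+i, a-k) is C(3a+2i, a) - C(3a+i, a), so the
   theorem reduces to  sum_(k <= a) w(i, k) C(3a+i, a-k) = C(3a+i, a+i).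
   This is proved by induction on i: passing from i to i+1 multiplies the
   right-hand side by (3a+i+1)/(a+i+1), and for the left-hand side the same
   holds term by term up to the differences of
   u(k) := (a-k) C(3a+i+1, a-k) C(i+k, 2k), which telescope to 0. *)

From mathcomp Require Import all_boot all_order all_algebra.
From mathcomp Require Import ring lra zify.
Import GRing.Theory Num.Theory.
Local Open Scope ring_scope.

Lemma natrB_mul_bin {R : pzRingType} n k :
  (n - k)%:R * 'C(n, k)%:R = (n%:R - k%:R) * 'C(n, k)%:R :> R.
Proof. by have [/natrB->|/bin_small->] := leqP k n; rewrite ?mulr0. Qed.

Lemma natr_bin_botS {R : numFieldType} n k :
  'C(n, k.+1)%:R = (n%:R - k%:R) / k.+1%:R * 'C(n, k)%:R :> R.
Proof.
rewrite mulrAC -natrB_mul_bin -natrM -mul_bin_left natrM.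
by rewrite mulrAC divff ?mul1r ?pnatr_eq0.
Qed.

Lemma natr_binSS {R : numFieldType} n k :
  'C(n.+1, k.+1)%:R = n.+1%:R / k.+1%:R * 'C(n, k)%:R :> R.
Proof.
by rewrite mulrAC -natrM (mul_bin_diag n.+1 k) natrM mulrAC divff ?mul1r ?pnatr_eq0.
Qed.

Lemma natr_bin_topS {R : numFieldType} n k :
  'C(n, k)%:R = (n.+1%:R - k%:R) / n.+1%:R * 'C(n.+1, k)%:R :> R.
Proof.
rewrite mulrAC -natrB_mul_bin -natrM -mul_bin_down natrM.
by rewrite mulrAC divff ?mul1r ?pnatr_eq0.
Qed.

Definition weight (i k : nat) : nat :=
  if k is k'.+1 then 'C(i + k, 2 * k) + 'C(i + k', (2 * k').+1) else 1.

Ltac natr_pos_neq0 := repeat (apply/andP; split); apply: lt0r_neq0; lra.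

Lemma weightE (R : realFieldType) i k : (0 < k)%N ->
  (i + 3 * k)%:R / (i + k)%:R * 'C(i + k, 2 * k)%:R = (weight i k)%:R :> R.
Proof.
case: k => [//|j] _; rewrite /weight.
have -> : (i + j.+1 = (i + j).+1)%N by lia.
have -> : (2 * j.+1 = (2 * j).+2)%N by lia.
(* Binomials are generalized before [natrD] is used: it would unfold them. *)
rewrite [in RHS]natrD natr_binSS; move: 'C(i + j, _) => y.
rewrite !(natrD, natrM, mulrSr).
have := ler0n R i; have := ler0n R j => *.
by field; natr_pos_neq0.
Qed.

Lemma natr_weightS {R : pzSemiRingType} i k :
  (weight i k.+1)%:R = 'C(i + k.+1, 2 * k.+1)%:R + 'C(i + k, (2 * k).+1)%:R :> R.
Proof. exact: natrD. Qed.

Lemma weight_0l k : weight 0 k = (k == 0)%N.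
Proof. by case: k => [//|k]; rewrite /weight !add0n !bin_small //; lia. Qed.

Section StepDefect.

Variables (R : realFieldType) (a i : nat).

Local Notation N := (3 * a + i)%N.

Definition telescoping_term k := ((a - k) * 'C(N.+1, a - k) * 'C(i + k, 2 * k))%N.

Local Notation step_defect k :=
  ((a + i).+1%:R * (weight i.+1 k * 'C(N.+1, a - k))%:R
   - N.+1%:R * (weight i k * 'C(N, a - k))%:R : R).

Lemma step_defect0 : step_defect 0 = - (telescoping_term 0)%:R.
Proof.
rewrite /telescoping_term /weight subn0 addn0 muln0 bin0 !mul1n !muln1.
rewrite (natr_bin_topS N a); move: 'C(N.+1, a) => z.
rewrite !(natrD, natrM, mulrSr).
have := ler0n R i; have := ler0n R a => *.
by field; natr_pos_neq0.
Qed.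

Lemma step_defectS j : (j < a)%N ->
  step_defect j.+1 = (telescoping_term j)%:R - (telescoping_term j.+1)%:R.
Proof.
move=> lt_j_a; rewrite /telescoping_term !natrM !natr_weightS.
set m := (a - j.+1)%N.
have -> : (a - j = m.+1)%N by rewrite /m; lia.
have -> : (i.+1 + j.+1 = (i + j).+2)%N by lia.
have -> : (i.+1 + j = (i + j).+1)%N by lia.
have -> : (i + j.+1 = (i + j).+1)%N by lia.
have -> : (2 * j.+1 = (2 * j).+2)%N by lia.
have ea : a = (m + j.+1)%N by rewrite /m; lia.
rewrite (natr_binSS (i + j).+1) (natr_bin_botS (i + j).+1 (2 * j).+1).
rewrite (natr_binSS (i + j) (2 * j)) (natr_bin_botS (i + j) (2 * j)).
rewrite (natr_bin_botS N.+1 m) (natr_bin_topS N m).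
move: 'C(i + j, 2 * j) 'C(N.+1, m) => x z.
rewrite ea !(natrD, natrM, mulrSr).
have := ler0n R i; have := ler0n R j; have := ler0n R m => *.
by field; natr_pos_neq0.
Qed.

End StepDefect.

Lemma weighted_sum_step a i :
  ((a + i).+1 * \sum_(0 <= k < a.+1) weight i.+1 k * 'C(3 * a + i.+1, a - k)
   = (3 * a + i).+1 * \sum_(0 <= k < a.+1) weight i k * 'C(3 * a + i, a - k))%N.
Proof.
apply/eqP; rewrite -(eqr_nat rat) -subr_eq0 addnS !natrM !natr_sum !mulr_sumr -sumrB.
rewrite big_nat_recl // (step_defect0 rat a i).
rewrite (eq_big_nat _ _ (F2 := fun k =>
  - ((telescoping_term a i k.+1)%:R - (telescoping_term a i k)%:R))); last first.
  by move=> k /andP[_ lt_k_a]; rewrite (step_defectS rat a i k lt_k_a) opprB.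
by rewrite sumrN telescope_sumr // /telescoping_term subnn !mul0n sub0r opprK addNr.
Qed.

Lemma weighted_sum_bin a i :
  (\sum_(0 <= k < a.+1) weight i k * 'C(3 * a + i, a - k) = 'C(3 * a + i, a + i))%N.
Proof.
elim: i => [|i IH].
  rewrite big_nat_recl // big1 => [|k _]; last by rewrite weight_0l mul0n.
  by rewrite subn0 !addn0 mul1n.
apply/eqP; rewrite -(eqn_pmul2l (ltn0Sn (a + i))) weighted_sum_step IH.
by rewrite (mul_bin_diag (3 * a + i).+1) !addnS.
Qed.

Theorem theorem2 (a i : nat) (ha : (0 < a)%N) (hi : (0 < i)%N) :
  ('C(3 * a + i, a + i))%:R - ('C(3 * a + 2 * i, a))%:R
  = \sum_(1 <= k < a.+1)
      (((i + 3 * k)%:R / (i + k)%:R) * ('C(i + k, 2 * k))%:R - ('C(i, k))%:R)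
        * ('C(3 * a + i, a - k))%:R :> rat.
Proof.
rewrite (eq_big_nat _ _ (F2 := fun k =>
  (weight i k * 'C(3 * a + i, a - k))%:R
  - ('C(i, k) * 'C(3 * a + i, a - k))%:R)); last first.
  by move=> k /andP[k_gt0 _]; rewrite mulrBl weightE // !natrM.
have /(congr1 (GRing.natmul (1 : rat))) := weighted_sum_bin a i.
rewrite natr_sum big_ltn // => <-.
have /(congr1 (GRing.natmul (1 : rat))) := binomial.Vandermonde i (3 * a + i) a.
rewrite -(big_mkord xpredT (fun k => 'C(i, k) * 'C(3 * a + i, a - k))%N).
rewrite natr_sum big_ltn // => vdm.
have -> : (3 * a + 2 * i = i + (3 * a + i))%N by lia.
by rewrite -vdm sumrB subn0 bin0 mul1n opprD addrACA subrr add0r.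
Qed.
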